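(* Let $n\ge1$ and $\beta\in\mathbb C$, $\beta\ne0$. Let $\tilde t^{(r)}_{ij}$ ($1\le i,j\le n$, $r\ge1$) be elements of a unital associative $\mathbb C$-algebra, put $\tilde t^{(0)}_{ij}=\delta_{ij}$ and $\tilde T_{ij}(u)=\sum_{r\ge0}\tilde t^{(r)}_{ij}u^{-r}$. Then the relations $$\left(u+\frac\beta u-v-\frac\beta v\right)[\tilde T_{ij}(u),\tilde T_{kl}(v)]=\tilde T_{kj}(u)\tilde T_{il}(v)-\tilde T_{kj}(v)\tilde T_{il}(u)\qquad(1\le i,j,k,l\le n)$$ hold if and only if for all $r,s\ge1$ and all $i,j,k,l$ $$[\tilde t^{(r)}_{ij},\tilde t^{(s)}_{kl}]=\sum_{\substack{p,m\ge0\\ m-s\le p\le r-m-1}}\beta^m\left(\tilde t^{(r-p-m-1)}_{kj}\tilde t^{(p+s-m)}_{il}-\tilde t^{(p+s-m)}_{kj}\tilde t^{(r-p-m-1)}_{il}\right).$$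
   Context: The first system is the defining relation system (in generating-series form) of the algebra $OY_\beta(\mathfrak{gl}_n)$ attached to Dickson polynomials; it is equivalent to the matrix relation $R^\beta(u,v)\tilde T_1(u)\tilde T_2(v)=\tilde T_2(v)\tilde T_1(u)R^\beta(u,v)$ with $R^\beta(u,v)=I-\frac{1}{u+\beta/u-v-\beta/v}P$, $P$ the permutation operator on $\mathbb C^n\otimes\mathbb C^n$. The identity of series is understood by comparing coefficients of monomials $u^{a}v^{b}$. *)

From HB Require Import structures.
From mathcomp Require Import all_boot all_algebra.
From mathcomp Require Import complex.
From mathcomp Require Import Rstruct.
Set Implicit Arguments. Unset Strict Implicit. Unset Printing Implicit Defensive.
Import GRing.Theory.
Local Open Scope ring_scope.

Definition CC : fieldType := (Rdefinitions.R)[i].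

Section Defs.
Variables (A : algType CC) (n : nat).

(* Generators t^{(r)}_{ij}, r >= 1, are given by t : nat -> 'I_n -> 'I_n -> A
   (the value t 0 i j is ignored); tt r i j is t^{(r)}_{ij} with the
   convention t^{(0)}_{ij} = delta_{ij}. *)
Definition tt (t : nat -> 'I_n -> 'I_n -> A) (r : nat) (i j : 'I_n) : A :=
  if r is 0 then (i == j)%:R else t r i j.

Definition comm (x y : A) : A := x * y - y * x.

(* A formal series in one variable z, given by its coefficients:
   S a = coefficient of z^a (a : int). *)
(* T_{ij}(z) = sum_{r>=0} t^{(r)}_{ij} z^{-r}. *)
Definition Tser (t : nat -> 'I_n -> 'I_n -> A) (i j : 'I_n) : int -> A :=
  fun a => match a with
           | Posz 0 => tt t 0 i j
           | Posz _ => 0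
           | Negz m => tt t m.+1 i j   (* Negz m = -(m+1) *)
           end.

(* Double series in u, v: S a b = coefficient of u^a v^b. *)
(* X(u) Y(v) *)
Definition mulUV (X Y : int -> A) : int -> int -> A := fun a b => X a * Y b.
(* Y(v) X(u) *)
Definition mulVU (Y X : int -> A) : int -> int -> A := fun a b => Y b * X a.
(* u^p v^q S(u,v) *)
Definition shiftUV (p q : int) (S : int -> int -> A) : int -> int -> A :=
  fun a b => S (a - p) (b - q).

(* The series relation
   (u + beta/u - v - beta/v) [T_ij(u), T_kl(v)] = T_kj(u) T_il(v) - T_kj(v) T_il(u),
   as an identity of coefficients of all monomials u^a v^b. *)
Definition series_relation (beta : CC) (t : nat -> 'I_n -> 'I_n -> A)
    (i j k l : 'I_n) : Prop :=
  let C := fun a b => mulUV (Tser t i j) (Tser t k l) a b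
                      - mulVU (Tser t k l) (Tser t i j) a b in
  forall a b : int,
    shiftUV 1 0 C a b + beta *: shiftUV (-1) 0 C a b
    - shiftUV 0 1 C a b - beta *: shiftUV 0 (-1) C a b
    = mulUV (Tser t k j) (Tser t i l) a b - mulVU (Tser t k j) (Tser t i l) a b.

(* Necessarily p, m < r, so the sum is taken over p < r, m < r. *)
Definition coeff_relation (beta : CC) (t : nat -> 'I_n -> 'I_n -> A)
    (r s : nat) (i j k l : 'I_n) : Prop :=
  comm (t r i j) (t s k l) =
  \sum_(p < r) \sum_(m < r | ((m <= p + s)%N && (p + m + 1 <= r)%N))
     beta ^+ m *: (tt t (r - p - m - 1)%N k j * tt t (p + s - m)%N i l
                   - tt t (p + s - m)%N k j * tt t (r - p - m - 1)%N i l).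

End Defs.

(* Comparing coefficients of u^(-r) v^(-s), the series relation says exactly
   that the commutators c(r,s) = [t^(r)_ij, t^(s)_kl] satisfy the recurrence
     c(r+1,s) + beta c(r-1,s) - c(r,s+1) - beta c(r,s-1) = D(r,s),
   D(r,s) = t^(r)_kj t^(s)_il - t^(s)_kj t^(r)_il, all other coefficients
   vanishing trivially.  Since c(0,s) = 0, the recurrence determines c row by
   row.  Summing first over p, the right-hand side of the coefficient relation
   is F(r,s) = sum_(m < min(r,s)) beta^m G(r-m, s-m) with the antidiagonal sums
   G(a,b) = sum_(x < a) D(x, a+b-1-x).  As G(a+1,b) = G(a,b+1) + D(a,b), and
   G(a,0) = 0 by antisymmetry of D, F telescopes into a solution of the same
   recurrence with the same zero boundary values; hence both conditions say
   c = F. *)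

From HB Require Import structures.
From mathcomp Require Import all_boot all_algebra zify.
Set Implicit Arguments. Unset Strict Implicit. Unset Printing Implicit Defensive.
Import GRing.Theory.
Local Open Scope ring_scope.

Section AntidiagonalSums.
Variables (R : pzRingType) (V : lmodType R) (beta : R) (g : nat -> nat -> V).

Definition wedge (r s : nat) : V := g r s - g s r.

Definition antidiag (a b : nat) : V := \sum_(x < a) wedge x (a + b - 1 - x).

Definition closed_form (r s : nat) : V :=
  \sum_(m < minn r s) beta ^+ m *: antidiag (r - m) (s - m).

Definition recurrence (f : nat -> nat -> V) (r s : nat) : V :=
  f r.+1 s + beta *: f r.-1 s - f r s.+1 - beta *: f r s.-1.

Lemma sum_wedge_antidiag K : \sum_(x < K) wedge x (K.-1 - x) = 0.
Proof.
rewrite sumrB (reindex_inj rev_ord_inj) /=; apply/eqP; rewrite subr_eq0; apply/eqP.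
by apply: eq_bigr => x _; congr g; have := ltn_ord x; lia.
Qed.

Lemma antidiag0l b : antidiag 0 b = 0.
Proof. exact: big_ord0. Qed.

Lemma antidiag0r a : antidiag a 0 = 0.
Proof. by rewrite /antidiag addn0 subn1 sum_wedge_antidiag. Qed.

Lemma antidiagS a b : antidiag a.+1 b = antidiag a b.+1 + wedge a b.
Proof.
rewrite /antidiag big_ord_recr /=; congr (_ + wedge _ _); last by lia.
by apply: eq_bigr => x _; congr wedge; have := ltn_ord x; lia.
Qed.

Lemma closed_form0l s : closed_form 0 s = 0.
Proof. by rewrite /closed_form min0n big_ord0. Qed.

Lemma closed_form0r r : closed_form r 0 = 0.
Proof. by rewrite /closed_form minn0 big_ord0. Qed.

Lemma closed_formE N r s : (minn r s <= N)%N ->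
  closed_form r s = \sum_(m < N) beta ^+ m *: antidiag (r - m) (s - m).
Proof.
move=> le_min_N; rewrite /closed_form (big_ord_widen N
  (fun m => beta ^+ m *: antidiag (r - m) (s - m)) le_min_N).
rewrite big_mkcond; apply: eq_bigr => m _; case: ifP => // /negbT.
rewrite -leqNgt geq_min -!subn_eq0 => /orP[] /eqP->.
  by rewrite antidiag0l scaler0.
by rewrite antidiag0r scaler0.
Qed.

Lemma closed_form_diff r s : closed_form r.+1 s - closed_form r s.+1 =
  \sum_(m < (minn r s).+1) beta ^+ m *: wedge (r - m) (s - m).
Proof.
rewrite !(closed_formE (N := (minn r s).+1)); [| lia..].
rewrite -sumrB; apply: eq_bigr => m _; rewrite -scalerBr.
have [le_m_r le_m_s] : (m <= r)%N /\ (m <= s)%N by have := ltn_ord m; lia.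
by rewrite !subSn // antidiagS addrC addKr.
Qed.

Lemma closed_form_recurrence r s : recurrence closed_form r s = wedge r s.
Proof.
rewrite /recurrence -addrA addrACA -scalerBr closed_form_diff.
case: r => [|r]; case: s => [|s];
  rewrite ?min0n ?minn0 ?closed_form0l ?closed_form0r ?subrr ?scaler0 ?addr0;
  try by rewrite big_ord1 expr0 scale1r !subn0.
rewrite /= -opprB closed_form_diff minnSS big_ord_recl expr0 scale1r !subn0.
rewrite scalerN scaler_sumr -addrA -sumrB big1 ?addr0 // => m _.
by rewrite !subSS exprS scalerA subrr.
Qed.

Lemma recurrence_solve f r s :
  f r.+1 s = recurrence f r s + beta *: f r s.-1 + f r s.+1 - beta *: f r.-1 s.
Proof. by rewrite /recurrence !subrK addrK. Qed.

Lemma recurrence_unique f h :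
    (forall s, f 0 s = h 0 s) ->
    (forall r s, recurrence f r s = recurrence h r s) ->
  forall r s, f r s = h r s.
Proof.
move=> eq_f0 eq_rec.
suff rows r : (forall s, f r s = h r s) /\ (forall s, f r.+1 s = h r.+1 s).
  by move=> r s; case: (rows r) => ->.
elim: r => [|r [eq_prev eq_row]]; split=> // s.
  by rewrite recurrence_solve [RHS]recurrence_solve eq_rec /= !eq_f0.
by rewrite recurrence_solve [RHS]recurrence_solve eq_rec /= !eq_row eq_prev.
Qed.

Lemma recurrence_iff_closed_form f :
    (forall s, f 0 s = 0) -> (forall r, f r 0 = 0) ->
  (forall r s, recurrence f r s = wedge r s) <->
  (forall r s, (0 < r)%N -> (0 < s)%N -> f r s = closed_form r s).
Proof.
move=> f0l f0r; split=> [rec_f r s _ _ | eq_f r s].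
  apply: recurrence_unique => [{}s | {}r {}s]; first by rewrite f0l closed_form0l.
  by rewrite rec_f closed_form_recurrence.
have {}eq_f r' s' : f r' s' = closed_form r' s'.
  case: r' s' => [|r'] [|s']; rewrite ?f0l ?closed_form0l ?f0r ?closed_form0r //.
  exact: eq_f.
by rewrite -closed_form_recurrence /recurrence !eq_f.
Qed.

Lemma antidiag_window r s m :
  \sum_(p < r | (m <= p + s)%N && (p + m + 1 <= r)%N) wedge (r - p - m - 1) (p + s - m)
  = antidiag (r - m) (s - m).
Proof.
pose lo := (m - s)%N; pose K := (r - m - lo)%N.
rewrite (eq_bigl (fun p : 'I_r => (lo <= p)%N && (p < r - m)%N)); last first.
  by move=> p /=; apply/andP/andP; case=> ? ?; split; lia.
transitivity (\sum_(lo <= p < r - m) wedge (r - p - m - 1) (p + s - m)).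
  by rewrite big_geq_mkord -(big_ord_widen_cond r (fun i => lo <= i)%N
    (fun i => wedge (r - i - m - 1) (i + s - m)) (leq_subr m r)).
rewrite -{1}[lo]add0n big_addn big_nat_rev big_mkord /=.
(* [lo] is positive only when [s - m = 0], and then both sides vanish. *)
have -> : antidiag (r - m) (s - m) = antidiag K (s - m).
  case: (leqP m s) => [le_m_s | lt_s_m]; first by rewrite /K /lo (eqP le_m_s) subn0.
  have -> : (s - m = 0)%N by lia.
  by rewrite !antidiag0r.
by apply: eq_bigr => x _; congr wedge; have := ltn_ord x; rewrite /K /lo; lia.
Qed.

Lemma coeff_sum_closed_form r s :
  \sum_(p < r) \sum_(m < r | (m <= p + s)%N && (p + m + 1 <= r)%N)
     beta ^+ m *: wedge (r - p - m - 1) (p + s - m) = closed_form r s.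
Proof.
rewrite (exchange_big_dep xpredT) //= (closed_formE (N := r)) ?geq_minl //.
by apply: eq_bigr => m _; rewrite -scaler_sumr antidiag_window.
Qed.

End AntidiagonalSums.

Section SeriesCoefficients.
Variables (n : nat) (A : algType CC) (beta : CC) (t : nat -> 'I_n -> 'I_n -> A).
Variables (i j k l : 'I_n).

Definition comm_coef (r s : nat) : A := comm (tt t r i j) (tt t s k l).

Definition prod_coef (r s : nat) : A := tt t r k j * tt t s i l.

Local Notation C a b := (comm (Tser t i j a) (Tser t k l b)).

Lemma comm_natl (m : nat) (y : A) : comm m%:R y = 0.
Proof. by rewrite /comm (commr_nat y) subrr. Qed.

Lemma comm_natr (m : nat) (y : A) : comm y m%:R = 0.
Proof. by rewrite /comm (commr_nat y) subrr. Qed.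

Lemma Tser_oppn x y (r : nat) : Tser t x y (- r%:Z) = tt t r x y.
Proof. by case: r. Qed.

Lemma Tser_nonneg x y (r : nat) : Tser t x y r = ((r == 0%N) && (x == y))%:R.
Proof. by case: r. Qed.

Lemma Tser_pos x y (r : nat) : Tser t x y r.+1 = 0.
Proof. by []. Qed.

Lemma comm_Tser_nonnegl (r : nat) b : C r b = 0.
Proof. by rewrite Tser_nonneg comm_natl. Qed.

Lemma comm_Tser_nonnegr a (s : nat) : C a s = 0.
Proof. by rewrite Tser_nonneg comm_natr. Qed.

Lemma comm_Tser_oppn r s : C (- r%:Z) (- s%:Z) = comm_coef r s.
Proof. by rewrite !Tser_oppn. Qed.

Lemma comm_coef0l s : comm_coef 0 s = 0.
Proof. exact: comm_natl. Qed.

Lemma comm_coef0r r : comm_coef r 0 = 0.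
Proof. exact: comm_natr. Qed.

(* For [r = 0] the exponent is [1 > 0] and both sides vanish, the right one as [0.-1 = 0]. *)
Lemma comm_Tser_oppnD1l r s : C (- r%:Z + 1) (- s%:Z) = comm_coef r.-1 s.
Proof.
case: r => [|r]; first by rewrite comm_Tser_nonnegl comm_coef0l.
by rewrite -comm_Tser_oppn; congr (C _ _); lia.
Qed.

Lemma comm_Tser_oppnD1r r s : C (- r%:Z) (- s%:Z + 1) = comm_coef r s.-1.
Proof.
case: s => [|s]; first by rewrite comm_Tser_nonnegr comm_coef0r.
by rewrite -comm_Tser_oppn; congr (C _ _); lia.
Qed.

Lemma series_relationE : series_relation beta t i j k l <->
  forall a b : int,
    C (a - 1) b + beta *: C (a + 1) b - C a (b - 1) - beta *: C a (b + 1)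
    = Tser t k j a * Tser t i l b - Tser t k j b * Tser t i l a.
Proof.
rewrite /series_relation /shiftUV /=.
by split=> rel a b; have := rel a b; rewrite !subr0 !opprK => h; exact: h.
Qed.

Lemma series_relation_oppn r s :
    C (- r%:Z - 1) (- s%:Z) + beta *: C (- r%:Z + 1) (- s%:Z)
    - C (- r%:Z) (- s%:Z - 1) - beta *: C (- r%:Z) (- s%:Z + 1)
  = recurrence beta comm_coef r s.
Proof.
have oppnS (x : nat) : - x%:Z - 1 = - x.+1%:Z by lia.
by rewrite comm_Tser_oppnD1l comm_Tser_oppnD1r !oppnS !comm_Tser_oppn.
Qed.

Lemma series_relation_iff : series_relation beta t i j k l <->
  forall r s, recurrence beta comm_coef r s = wedge prod_coef r s.
Proof.
rewrite series_relationE; split=> [rel r s | rec a b].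
  by rewrite -series_relation_oppn rel !Tser_oppn.
have oppn_or_pos (c : int) : (exists r : nat, c = - r%:Z) \/ (exists r : nat, c = r.+1%:Z).
  by case: c => [[|r]|r]; [left; exists 0%N | right; exists r | left; exists r.+1].
case: (oppn_or_pos a) => [[r ->]|[r ->]]; last first.
  by rewrite !comm_Tser_nonnegl !Tser_pos !(scaler0, subr0, addr0, mul0r, mulr0).
case: (oppn_or_pos b) => [[s ->]|[s ->]]; last first.
  by rewrite !comm_Tser_nonnegr !Tser_pos !(scaler0, subr0, addr0, mul0r, mulr0).
by rewrite series_relation_oppn rec !Tser_oppn.
Qed.

Lemma series_relation_iff_closed_form : series_relation beta t i j k l <->
  forall r s, (0 < r)%N -> (0 < s)%N ->
    comm_coef r s = closed_form beta prod_coef r s.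
Proof.
rewrite series_relation_iff.
exact: recurrence_iff_closed_form comm_coef0l comm_coef0r.
Qed.

Lemma coeff_relationE r s : (0 < r)%N -> (0 < s)%N ->
  coeff_relation beta t r s i j k l <-> comm_coef r s = closed_form beta prod_coef r s.
Proof.
case: r s => [|r] [|s] // _ _.
by rewrite /coeff_relation -coeff_sum_closed_form.
Qed.

End SeriesCoefficients.

Theorem mainTheorem6 (n : nat) (hn : (1 <= n)%N) (beta : CC) (hbeta : beta != 0)
    (A : algType CC) (t : nat -> 'I_n -> 'I_n -> A) :
  (forall i j k l : 'I_n, series_relation beta t i j k l) <->
  (forall (r s : nat), (1 <= r)%N -> (1 <= s)%N ->
     forall i j k l : 'I_n, coeff_relation beta t r s i j k l).
Proof.
split=> [rel r s r_gt0 s_gt0 i j k l | rel i j k l].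
  have /series_relation_iff_closed_form closed_form_eq := rel i j k l.
  exact/coeff_relationE/closed_form_eq.
apply/series_relation_iff_closed_form => r s r_gt0 s_gt0.
exact/coeff_relationE/rel.
Qed.
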